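(* Let $(R,\mathfrak{m})$ be a commutative Artinian local ring with identity, $\mathfrak{m}\neq0$ and $\mathfrak{m}^2=0$. For every integer $n\ge7$, $3\in L(x^n)$.
   Context: A nonunit polynomial in $R[x]$ is irreducible if in any factorization into two polynomials one factor is a unit of $R[x]$. A positive integer $k$ is a length of $f$ if $f$ is a product of $k$ irreducible polynomials of $R[x]$; $L(f)$ denotes the set of lengths of $f$. *)

From HB Require Import structures.
From mathcomp Require Import all_boot all_order all_algebra.
Set Implicit Arguments. Unset Strict Implicit. Unset Printing Implicit Defensive.
Import GRing.Theory.
Local Open Scope ring_scope.

Definition is_ideal (R : comNzRingType) (I : R -> Prop) : Prop :=
  [/\ I 0, (forall a b, I a -> I b -> I (a + b)) & (forall r a, I a -> I (r * a))].

Definition is_maximal_ideal (R : comNzRingType) (I : R -> Prop) : Prop :=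
  [/\ is_ideal I, ~ I 1 &
      forall J : R -> Prop, is_ideal J -> (forall x, I x -> J x) ->
        (forall x, J x <-> I x) \/ J 1].

Definition artinian (R : comNzRingType) : Prop :=
  forall I : nat -> R -> Prop,
    (forall n, is_ideal (I n)) ->
    (forall n x, I n.+1 x -> I n x) ->
    exists N, forall n, (N <= n)%N -> forall x, I n x <-> I N x.

Definition poly_unit (R : comNzRingType) (f : {poly R}) : Prop :=
  exists g : {poly R}, f * g = 1.

Definition poly_irreducible (R : comNzRingType) (f : {poly R}) : Prop :=
  ~ poly_unit f /\
  forall g h : {poly R}, f = g * h -> poly_unit g \/ poly_unit h.

Definition is_length (R : comNzRingType) (f : {poly R}) (k : nat) : Prop :=
  (0 < k)%N /\
  exists s : seq {poly R},
    [/\ size s = k, (forall p, p \in s -> poly_irreducible p)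
      & \prod_(p <- s) p = f].

From Pilot Require Import Defs.
From HB Require Import structures.
From mathcomp Require Import all_boot all_order all_algebra.
From mathcomp Require Import ring zify.
From Stdlib Require Import Classical.
Set Implicit Arguments. Unset Strict Implicit. Unset Printing Implicit Defensive.
Import GRing.Theory.
Local Open Scope ring_scope.

(* Let a be a nonzero element of m. For n = 2d + 1 and n = 2e + 2 (e >= 3),
     x^n = x (x^d + a) (x^d - a) = (x^2 + a) (x^e + a) (x^e - a - a x^(e-2)),
   because a^2 = 0. Each factor is irreducible by the following criterion: if
   every coefficient of f lies in m except the one of x^d (d > 0), and d = 1
   or f(0) != 0, then f is irreducible. Indeed, modulo m a factorization
   f = g h reads unit * x^d = g' h', which forces g' and h' to be monomials,
   i.e. the lowest and highest coefficients of g (resp. h) outside m sit at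
   the same index i (resp. j), with i + j = d. If i, j > 0 then
   f(0) = g(0) h(0) lies in m^2 = 0; so, say, i = 0, and then g is a unit
   plus a polynomial of square zero, hence a unit. *)

Lemma classical_ex_min (P : nat -> Prop) :
  (exists n, P n) -> exists i, P i /\ forall j, (j < i)%N -> ~ P j.
Proof.
move=> [n]; elim/ltn_ind: n => n IH Pn.
case: (classic (exists2 j, (j < n)%N & P j)) => [[j ltjn Pj]|noP].
  exact: IH j ltjn Pj.
by exists n; split=> // j ltjn Pj; apply: noP; exists j.
Qed.

Lemma classical_ex_max_below (P : nat -> Prop) N :
  (exists2 n, (n < N)%N & P n) ->
  exists i, P i /\ forall j, (i < j < N)%N -> ~ P j.
Proof.
elim: N => [[n //]|N IH [n ltnN1 Pn]].
case: (classic (P N)) => [PN|nPN].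
  by exists N; split=> // j; lia.
have ltnN : (n < N)%N.
  by rewrite ltn_neqAle -ltnS ltnN1 andbT; apply/eqP => enN; case: nPN; rewrite -enN.
have [i [Pi maxi]] := IH (ex_intro2 _ _ n ltnN Pn).
exists i; split=> // j /andP[ltij]; rewrite ltnS leq_eqVlt => /orP[/eqP->//|ltjN].
by apply: maxi; rewrite ltij ltjN.
Qed.

Lemma is_length3 (R : comNzRingType) (f g h : {poly R}) :
  poly_irreducible f -> poly_irreducible g -> poly_irreducible h ->
  is_length (f * g * h) 3.
Proof.
move=> irr_f irr_g irr_h; split=> //; exists [:: f; g; h]; split=> //.
  by move=> p; rewrite !inE => /or3P[] /eqP->.
by rewrite !big_cons big_nil mulr1 mulrA.
Qed.

Lemma maximal_sqr0_unit (R : comNzRingType) (m : R -> Prop) :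
  is_maximal_ideal m -> (forall a b, m a -> m b -> a * b = 0) ->
  forall r, ~ m r -> exists s, r * s = 1.
Proof.
move=> [[m0 mD mM] _ m_max] m_mul0 r nmr.
pose J y := exists x s, m x /\ y = x + r * s.
have J_ideal : is_ideal J.
  split.
  - by exists 0, 0; rewrite mulr0 addr0.
  - move=> _ _ [x [s [mx ->]]] [y [t [my ->]]].
    exists (x + y), (s + t); split; first exact: mD.
    by rewrite mulrDr addrACA.
  - move=> r' _ [x [s [mx ->]]]; exists (r' * x), (r' * s); split; first exact: mM.
    by rewrite mulrDr mulrCA.
have mJ x : m x -> J x by move=> mx; exists x, 0; rewrite mulr0 addr0.
case: (m_max J J_ideal mJ) => [J_m|[x [s [mx e1]]]].
  by case: nmr; apply/J_m; exists 0, 1; rewrite mulr1 add0r.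
exists (s * (1 + x)); rewrite mulrA.
have -> : r * s = 1 - x by rewrite e1 addrC addKr.
have -> : (1 - x) * (1 + x) = 1 - x * x by ring.
by rewrite m_mul0 // subr0.
Qed.

Section SquareZeroLocalRing.

Variable R : comNzRingType.
Variable m : R -> Prop.
Hypotheses (m0 : m 0) (mD : forall a b, m a -> m b -> m (a + b))
  (mMl : forall r a, m a -> m (r * a)).
Hypothesis m1 : ~ m 1.
Hypothesis unit_notin_m : forall r, ~ m r -> exists s, r * s = 1.
Hypothesis m_mul0 : forall a b, m a -> m b -> a * b = 0.

Lemma mMr a r : m a -> m (a * r).
Proof. by move=> ma; rewrite mulrC; apply: mMl. Qed.

Lemma mN a : m a -> m (- a).
Proof. by move=> ma; rewrite -mulN1r; apply: mMl. Qed.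

Lemma mB a b : m a -> m b -> m (a - b).
Proof. by move=> ma mb; apply: mD => //; apply: mN. Qed.

Lemma m_mul_or a b : m a \/ m b -> m (a * b).
Proof. by case=> [/mMr|/mMl]. Qed.

Lemma m_sum (I : Type) (r : seq I) (P : pred I) (F : I -> R) :
  (forall i, P i -> m (F i)) -> m (\sum_(i <- r | P i) F i).
Proof. by move=> mF; apply: big_ind. Qed.

Lemma notin_m_addr u x : ~ m u -> m x -> ~ m (u + x).
Proof. by move=> nmu mx mux; apply: nmu; rewrite -(addrK x u); apply: mB. Qed.

Lemma notin_m_mul u v : ~ m u -> ~ m v -> ~ m (u * v).
Proof.
move=> /unit_notin_m[u' uu'] /unit_notin_m[v' vv'] muv; apply: m1.
have -> : 1 = (u' * v') * (u * v) by rewrite mulrACA [v' * v]mulrC vv' mulr1 mulrC uu'.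
exact: mMl.
Qed.

Definition coefs_in_m (p : {poly R}) := forall i, m p`_i.

Definition m_lowest (p : {poly R}) i := ~ m p`_i /\ forall j, (j < i)%N -> m p`_j.

Definition m_highest (p : {poly R}) i := ~ m p`_i /\ forall j, (i < j)%N -> m p`_j.

Lemma m_lowest_exists p : ~ coefs_in_m p -> exists i, m_lowest p i.
Proof.
move=> /not_all_ex_not/classical_ex_min[i [nmi mini]].
by exists i; split=> // j /mini/NNPP.
Qed.

Lemma m_highest_exists p : ~ coefs_in_m p -> exists i, m_highest p i.
Proof.
move=> /not_all_ex_not[k nmk].
have ltk_size : (k < size p)%N.
  by rewrite ltnNge; apply/negP => /leq_sizeP pk0; apply: nmk; rewrite pk0.
have [i [nmi maxi]] :=
  @classical_ex_max_below (fun k => ~ m p`_k) _ (ex_intro2 _ _ k ltk_size nmk).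
exists i; split=> // j ltij; case: (ltnP j (size p)) => [ltj_size|/leq_sizeP-> //].
by apply: NNPP; apply: maxi; rewrite ltij.
Qed.

Lemma coefs_in_mMl p q : coefs_in_m q -> coefs_in_m (p * q).
Proof. by move=> mq i; rewrite coefM; apply: m_sum => j _; apply: mMl. Qed.

Lemma coefs_in_mMr p q : coefs_in_m p -> coefs_in_m (p * q).
Proof. by move=> mp; rewrite mulrC; apply: coefs_in_mMl. Qed.

Lemma coefs_in_m_mul0 p q : coefs_in_m p -> coefs_in_m q -> p * q = 0.
Proof.
move=> mp mq; apply/polyP => i; rewrite coefM coef0 big1 // => j _.
exact: m_mul0.
Qed.

Lemma coefM_in_m (g h : {poly R}) k :
  (forall l, (l <= k)%N -> m g`_l \/ m h`_(k - l)) -> m (g * h)`_k.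
Proof.
by move=> mgh; rewrite coefM; apply: m_sum => l _; apply: m_mul_or; apply: mgh; rewrite -ltnS.
Qed.

Lemma coefM_notin_m (g h : {poly R}) i j : ~ m g`_i -> ~ m h`_j ->
  (forall l, l != i -> (l <= i + j)%N -> m g`_l \/ m h`_(i + j - l)) ->
  ~ m (g * h)`_(i + j).
Proof.
move=> nmgi nmhj mgh.
rewrite coefM (bigD1 (@Ordinal (i + j).+1 i (leq_addr j i.+1))) //= addKn.
apply: notin_m_addr; first exact: notin_m_mul.
apply: m_sum => l neli; apply: m_mul_or; apply: mgh; last by rewrite -ltnS.
by rewrite -val_eqE in neli.
Qed.

Lemma m_lowestM g h i j : m_lowest g i -> m_lowest h j -> m_lowest (g * h) (i + j).
Proof.
move=> [nmgi lowg] [nmhj lowh]; split.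
  apply: coefM_notin_m => // l neli lelij.
  by case: (ltngtP l i) neli => // [/lowg|ltil _]; [left | right; apply: lowh; lia].
move=> k ltk; apply: coefM_in_m => l lelk.
by case: (ltnP l i) => [/lowg|leil]; [left | right; apply: lowh; lia].
Qed.

Lemma m_highestM g h i j : m_highest g i -> m_highest h j -> m_highest (g * h) (i + j).
Proof.
move=> [nmgi highg] [nmhj highh]; split.
  apply: coefM_notin_m => // l neli lelij.
  by case: (ltngtP l i) neli => // [ltli _|/highg]; [right; apply: highh; lia | left].
move=> k ltk; apply: coefM_in_m => l lelk.
by case: (ltnP i l) => [/highg|leli]; [left | right; apply: highh; lia].
Qed.

Lemma m_lowest_uniq p i j : m_lowest p i -> m_lowest p j -> i = j.
Proof.
by move=> [nmi lowi] [nmj lowj]; case: (ltngtP i j) => // [/lowj|/lowi].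
Qed.

Lemma m_highest_uniq p i j : m_highest p i -> m_highest p j -> i = j.
Proof.
by move=> [nmi highi] [nmj highj]; case: (ltngtP i j) => // [/highi|/highj].
Qed.

Lemma m_lowest_leq_highest p i j : m_lowest p i -> m_highest p j -> (i <= j)%N.
Proof. by move=> [_ lowi] [nmj _]; rewrite leqNgt; apply/negP => /lowi. Qed.

Lemma m_highest0_poly_unit p : m_highest p 0 -> Defs.poly_unit p.
Proof.
move=> [/unit_notin_m[v p0v] highp].
pose q := p - (p`_0)%:P.
have q_m : coefs_in_m q.
  by case=> [|i]; rewrite /q coefB coefC /= ?subrr // subr0; apply: highp.
have qq0 : q * q = 0 by apply: coefs_in_m_mul0.
have p0v1 : (p`_0)%:P * v%:P = 1 by rewrite -polyCM p0v.
exists (v%:P - v%:P * v%:P * q).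
have -> : p = (p`_0)%:P + q by rewrite /q addrC subrK.
have -> : ((p`_0)%:P + q) * (v%:P - v%:P * v%:P * q) =
  1 + ((p`_0)%:P * v%:P - 1) * (1 - v%:P * q) - v%:P * v%:P * (q * q) by ring.
by rewrite p0v1 qq0 subrr mul0r mulr0 addr0 subr0.
Qed.

Lemma poly_irreducible_mod_m_monomial f d : (0 < d)%N ->
  m_lowest f d -> m_highest f d -> (d = 1%N \/ f`_0 != 0) -> poly_irreducible f.
Proof.
move=> d_gt0 lowf highf d1_or_f0.
have factor_notin_m g h : f = g * h -> ~ coefs_in_m g /\ ~ coefs_in_m h.
  move=> fE; split=> mgh; apply: lowf.1; rewrite fE.
    exact: coefs_in_mMr.
  exact: coefs_in_mMl.
split.
  move=> [g fg1].
  have [j lowg] : exists j, m_lowest g j.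
    by apply: m_lowest_exists => mg; apply: m1; have := coefs_in_mMl f mg 0; rewrite fg1 coef1.
  have low1 : m_lowest (f * g) 0 by rewrite fg1; split; rewrite ?coef1.
  by have := m_lowest_uniq (m_lowestM lowf lowg) low1; lia.
move=> g h fE; have [ng nh] := factor_notin_m g h fE.
have [i lowg] := m_lowest_exists ng; have [j lowh] := m_lowest_exists nh.
have [i' highg] := m_highest_exists ng; have [j' highh] := m_highest_exists nh.
have dE : d = (i + j)%N by apply: m_lowest_uniq lowf _; rewrite fE; apply: m_lowestM.
have dE' : d = (i' + j')%N by apply: m_highest_uniq highf _; rewrite fE; apply: m_highestM.
have := m_lowest_leq_highest lowg highg; have := m_lowest_leq_highest lowh highh.
move=> lejj' leii'; have ei : i' = i by lia.
have ej : j' = j by lia.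
subst i' j'.
have [i0|j0] : i = 0%N \/ j = 0%N.
  case: d1_or_f0 => [|f0]; first lia.
  case: (posnP i) => [|i_gt0]; first by left.
  case: (posnP j) => [|j_gt0]; first by right.
  by case/eqP: f0; rewrite fE coef0M m_mul0 //; [apply: lowg.2 | apply: lowh.2].
- by left; apply: m_highest0_poly_unit; rewrite -i0.
- by right; apply: m_highest0_poly_unit; rewrite -j0.
Qed.

Lemma poly_irreducible_XnD d q : (0 < d)%N -> coefs_in_m q -> q`_d = 0 ->
  (d = 1%N \/ q`_0 != 0) -> poly_irreducible ('X^d + q).
Proof.
move=> d_gt0 mq qd0 d1_or_q0.
have coefXnDq i : ('X^d + q)`_i = (i == d)%:R + q`_i by rewrite coefD coefXn.
have nm_d : ~ m ('X^d + q)`_d by rewrite coefXnDq eqxx qd0 addr0.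
have m_ne i : i != d -> m ('X^d + q)`_i by move=> /negPf nid; rewrite coefXnDq nid add0r.
apply: (poly_irreducible_mod_m_monomial d_gt0).
- by split=> // j ltjd; apply: m_ne; rewrite ltn_eqF.
- by split=> // j ltdj; apply: m_ne; rewrite gtn_eqF.
- by rewrite coefXnDq (_ : (0 == d)%N = false) ?add0r //; lia.
Qed.

Lemma poly_irreducibleX : poly_irreducible ('X : {poly R}).
Proof.
rewrite -['X]addr0; apply: (@poly_irreducible_XnD 1); rewrite ?coef0 //; last by left.
by move=> i; rewrite coef0.
Qed.

Lemma poly_irreducible_XnDC d c : (0 < d)%N -> m c -> c != 0 ->
  poly_irreducible ('X^d + c%:P).
Proof.
move=> d_gt0 mc c_neq0; apply: poly_irreducible_XnD; rewrite ?coefC //.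
- by move=> i; rewrite coefC; case: ifP.
- by rewrite gtn_eqF.
- by right.
Qed.

Variable a : R.
Hypotheses (ma : m a) (a_neq0 : a != 0).

Lemma Xn_odd_length3 d : (0 < d)%N -> is_length ('X^((d + d).+1) : {poly R}) 3.
Proof.
move=> d_gt0.
have -> : 'X^((d + d).+1) = 'X * ('X^d + a%:P) * ('X^d + (- a)%:P) :> {poly R}.
  have aa0 : a%:P * a%:P = 0 :> {poly R} by rewrite -polyCM m_mul0.
  rewrite polyCN exprS exprD; set A := a%:P.
  have -> : 'X * ('X^d + A) * ('X^d + - A) = 'X * ('X^d * 'X^d) - 'X * (A * A) by ring.
  by rewrite aa0 mulr0 subr0.
apply: is_length3; first exact: poly_irreducibleX.
- exact: poly_irreducible_XnDC.
- by apply: poly_irreducible_XnDC; rewrite ?oppr_eq0 //; apply: mN.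
Qed.

Lemma Xn_even_length3 e : (3 <= e)%N -> is_length ('X^(e + e + 2) : {poly R}) 3.
Proof.
move=> e_ge3; set Y : {poly R} := 'X^(e - 2); set q := - (a%:P * (1 + Y)).
have XeE : 'X^e = 'X^2 * Y by rewrite -exprD; congr (_ ^+ _); lia.
have -> : 'X^(e + e + 2) = ('X^2 + a%:P) * ('X^e + a%:P) * ('X^e + q).
  have aa0 : a%:P * a%:P = 0 :> {poly R} by rewrite -polyCM m_mul0.
  have -> : 'X^(e + e + 2) = 'X^6 * (Y * Y) :> {poly R}.
    by rewrite -!exprD; congr (_ ^+ _); lia.
  rewrite /q XeE; set A := a%:P.
  have -> : ('X^2 + A) * ('X^2 * Y + A) * ('X^2 * Y + - (A * (1 + Y))) =
    'X^6 * (Y * Y) + A * A * ('X^2 * Y - ('X^2 + 'X^2 * Y) * (1 + Y) - A * (1 + Y)).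
    by ring.
  by rewrite aa0 mul0r addr0.
have coef_q i : q`_i = - (a * ((i == 0%N)%:R + (i == e - 2)%N%:R)).
  by rewrite coefN coefCM coefD coef1 coefXn.
apply: is_length3; [exact: poly_irreducible_XnDC | apply: poly_irreducible_XnDC => //; lia | ].
apply: poly_irreducible_XnD; first lia.
- by move=> i; rewrite coef_q; apply: mN; apply: mMr.
- by rewrite coef_q !gtn_eqF ?addr0 ?mulr0 ?oppr0 //; lia.
- by right; rewrite coef_q eqxx ltn_eqF ?addr0 ?mulr1 ?oppr_eq0 //; lia.
Qed.

End SquareZeroLocalRing.

Theorem lemma4p12 (R : comNzRingType) (m : R -> Prop)
  (hart : artinian R)
  (hmax : is_maximal_ideal m)
  (hloc : forall J : R -> Prop, is_maximal_ideal J -> forall x, J x <-> m x)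
  (hm0 : exists a : R, m a /\ a != 0)
  (hm2 : forall a b : R, m a -> m b -> a * b = 0)
  (n : nat) (hn : (7 <= n)%N) :
  is_length ('X^n : {poly R}) 3.
Proof.
have unit_notin_m := maximal_sqr0_unit hmax hm2.
case: hmax hm0 => [[m0 mD mM] m1 _] [a [ma a_neq0]].
have nE := odd_double_half n; rewrite -addnn in nE.
case: (boolP (odd n)) nE => _ nE.
- rewrite -nE add1n.
  by apply: (Xn_odd_length3 m0 mD mM m1 unit_notin_m hm2 ma a_neq0); lia.
- have -> : n = ((n./2).-1 + (n./2).-1 + 2)%N by lia.
  by apply: (Xn_even_length3 m0 mD mM m1 unit_notin_m hm2 ma a_neq0); lia.
Qed.
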